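(* Let $(G,k)$ be an instance of PITVD, let $S\subseteq V(G)$ be such that $G-S$ is a simple (prop-int, tree)-graph, and let $V_1$ be the set of vertices of the connected components of $G-S$ that contain a cycle. Let $\mathcal{B}$ be the bipartite graph with one side $S$ and the other side the set $\mathcal{C}$ of connected components of $G[V_1]$, where $s\in S$ is adjacent to $D\in\mathcal{C}$ iff $s$ has a neighbor in $D$ in $G$. Suppose $\widehat{S}\subseteq S$ and $\widehat{\mathcal{C}}\subseteq\mathcal{C}$ are non-empty sets such that (i) there is a $3$-expansion of $\widehat{S}$ into $\widehat{\mathcal{C}}$ in $\mathcal{B}$, and (ii) $N_{\mathcal{B}}(\widehat{\mathcal{C}})\subseteq\widehat{S}$. Then $(G,k)$ is a yes-instance of PITVD if and only if $(G-\widehat{S},k-|\widehat{S}|)$ is a yes-instance of PITVD.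
   Context: PITVD: the input is an undirected multigraph $G$ (no self-loops) and an integer $k$; the question is whether there exists $X\subseteq V(G)$ with $|X|\le k$ such that $G-X$ is a simple graph and every connected component of $G-X$ is a proper interval graph or a tree. A simple graph is a (prop-int, tree)-graph if each component is a proper interval graph or a tree. For a bipartite graph with sides $A,B$ and $\widehat{A}\subseteq A$, $\widehat{B}\subseteq B$, a set $M$ of edges is a $q$-expansion of $\widehat{A}$ into $\widehat{B}$ if every vertex of $\widehat{A}$ is incident to exactly $q$ edges of $M$ and exactly $q|\widehat{A}|$ vertices of $\widehat{B}$ are incident to edges of $M$. *)

From mathcomp Require Import all_boot all_order all_algebra.
Set Implicit Arguments. Unset Strict Implicit. Unset Printing Implicit Defensive.
Import Order.TTheory GRing.Theory Num.Theory.

(* A multigraph on a finite vertex type T is given by a vertex set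
   V : {set T} and an edge-multiplicity function m : T -> T -> nat
   (m x y = number of parallel edges between x and y).  The graph G - X
   is represented by the vertex set V :\: X with the same m. *)

Section Graphs.
Variable T : finType.

Definition induced_rel (V : {set T}) (m : T -> T -> nat) : rel T :=
  [rel x y | [&& x \in V, y \in V & 0 < m x y]].

Definition simple_on (V : {set T}) (m : T -> T -> nat) : Prop :=
  forall x y, x \in V -> y \in V -> m x y <= 1.

Definition component (V : {set T}) (m : T -> T -> nat) (x : T) : {set T} :=
  [set y in V | connect (induced_rel V m) x y].

Definition components (V : {set T}) (m : T -> T -> nat) : {set {set T}} :=
  [set component V m x | x in V].

Definition has_cycle (V : {set T}) (m : T -> T -> nat) : Prop :=
  exists p : seq T,
    [/\ 3 <= size p, uniq p, all (fun v => v \in V) p & cycle (induced_rel V m) p].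

Definition is_tree (V : {set T}) (m : T -> T -> nat) : Prop :=
  (forall x y, x \in V -> y \in V -> connect (induced_rel V m) x y)
  /\ ~ has_cycle V m.

(* the graph induced on V is a proper interval graph: it has an interval model
   (closed intervals [l v, r v], rational endpoints) in which no interval
   properly contains another *)
Definition proper_interval (V : {set T}) (m : T -> T -> nat) : Prop :=
  exists l r : T -> rat,
    [/\ forall v, v \in V -> (l v <= r v)%R,
        forall u v, u \in V -> v \in V -> u != v ->
          (0 < m u v) = ((l u <= r v)%R && (l v <= r u)%R)
      & forall u v, u \in V -> v \in V ->
          ~ [&& (l u <= l v)%R, (r v <= r u)%R & ((l u < l v)%R || (r v < r u)%R)]].

Definition pit_graph (V : {set T}) (m : T -> T -> nat) : Prop :=
  simple_on V m /\
  forall C, C \in components V m -> proper_interval C m \/ is_tree C m.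

Definition pitvd_yes (V : {set T}) (m : T -> T -> nat) (k : int) : Prop :=
  exists X : {set T}, [/\ X \subset V, (Posz #|X| <= k)%R & pit_graph (V :\: X) m].

End Graphs.

From mathcomp Require Import all_boot all_order all_algebra.
From mathcomp Require Import zify.
Set Implicit Arguments. Unset Strict Implicit. Unset Printing Implicit Defensive.
Import Order.TTheory GRing.Theory Num.Theory.

(* Let X solve (G, k) and W be the union of [Chat].  A vertex s of [Shat]
   outside X has three expansion partners, distinct components of [Chat]; if
   none of them met X, then s with a neighbour in each would be a claw in its
   component of G - X, and that component would also contain the cycle of a
   partner, so it would be neither proper interval nor a tree.  Choosing a
   vertex of X in such a partner injects [Shat :\: X] into [X :&: W], so
   X' := X :\: (Shat :|: W) is small enough.  By (ii) no edge of G - Shat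
   leaves W, so every component of G - Shat - X' is a connected induced
   subgraph either of a component of G - S (inside W) or of a component of
   G - X (outside W). *)

Lemma connect_sub_stable (T : finType) (e e' : rel T) (P : pred T) x y :
  P x -> (forall z w, P z -> e z w -> P w /\ e' z w) ->
  connect e x y -> connect e' x y /\ P y.
Proof.
move=> Px He /connectP [p pth ->] {y}.
elim: p x Px pth => [|w p IH] x Px /=; first by split.
case/andP=> exw pth; have [Pw e'xw] := He _ _ Px exw.
have [c Pl] := IH w Pw pth.
by split=> //; apply: connect_trans (connect1 e'xw) c.
Qed.

Lemma leq_card_rel (T1 T2 : finType) (A : {set T1}) (B : {set T2})
    (R : T1 -> T2 -> bool) :
  (forall a, a \in A -> exists2 b, b \in B & R a b) ->
  (forall a a' b, a \in A -> a' \in A -> R a b -> R a' b -> a = a') ->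
  #|A| <= #|B|.
Proof.
move=> total Runiq; have [->|[a0 a0A]] := set_0Vmem A; first by rewrite cards0.
have [b0 _ _] := total a0 a0A.
pose f a := odflt b0 [pick b in B | R a b].
have fP a : a \in A -> (f a \in B) && R a (f a).
  rewrite /f => aA; case: pickP => [b //|none].
  by have [b bB Rab] := total a aA; move: (none b); rewrite bB Rab.
rewrite -(card_in_imset (f := f)).
  by apply/subset_leq_card/subsetP=> _ /imsetP[a /fP/andP[fB _] ->].
move=> a a' aA a'A faa'; have /andP[_ Ra] := fP a aA.
by have /andP[_] := fP a' a'A; rewrite -faa'; apply: Runiq.
Qed.

Section InducedSubgraphs.
Variables (T : finType) (m : T -> T -> nat).
Hypothesis msym : forall x y, m x y = m y x.
Implicit Types (A B C D U W : {set T}).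

Definition edge_closed B A :=
  forall x y, x \in B -> y \in A -> 0 < m x y -> y \in B.

Definition connected_on C :=
  forall x y, x \in C -> y \in C -> connect (induced_rel C m) x y.

Lemma induced_rel_sym A : symmetric (induced_rel A m).
Proof. by move=> x y; rewrite /induced_rel /= msym andbCA. Qed.

Lemma connect_induced_subset A B x y : A \subset B ->
  connect (induced_rel A m) x y -> connect (induced_rel B m) x y.
Proof.
move=> sAB cxy.
have [] // := connect_sub_stable (e' := induced_rel B m) (P := predT) isT _ cxy.
by move=> z w _ /and3P[zA wA mzw]; split=> //; apply/and3P; rewrite !(subsetP sAB).
Qed.

Lemma component_sub A x : component A m x \subset A.
Proof. by apply/subsetP=> y; rewrite inE => /andP[]. Qed.

Lemma components_sub A D : D \in components A m -> D \subset A.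
Proof. by case/imsetP=> x _ ->; apply: component_sub. Qed.

Lemma component_id A x : x \in A -> x \in component A m x.
Proof. by move=> xA; rewrite inE xA connect0. Qed.

Lemma component_eq A x y :
  y \in component A m x -> component A m y = component A m x.
Proof.
rewrite inE => /andP[yA cxy]; apply/setP=> z; rewrite !inE.
have csym := sym_connect_sym (induced_rel_sym A).
apply: andb_id2l => zA; apply/idP/idP; first exact: connect_trans.
by apply: connect_trans; rewrite csym.
Qed.

Lemma components_eq A D D' v : D \in components A m -> D' \in components A m ->
  v \in D -> v \in D' -> D = D'.
Proof.
move=> /imsetP[a _ ->] /imsetP[b _ ->] vD vD'.
by rewrite -(component_eq vD) (component_eq vD').
Qed.

Lemma components_edge_closed A D : D \in components A m -> edge_closed D A.
Proof.
case/imsetP=> a _ -> z w; rewrite !inE => /andP[zA caz] wA mzw; rewrite wA.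
by apply: connect_trans caz (connect1 _); apply/and3P.
Qed.

Lemma components_separated A D D' x y :
  D \in components A m -> D' \in components A m -> D != D' -> x \in D -> y \in D' ->
  x != y /\ m x y = 0.
Proof.
move=> DA D'A nDD' xD yD'; split.
  by apply: contraNneq nDD' => exy; apply/eqP/(components_eq DA D'A xD); rewrite exy.
apply/eqP; rewrite eqn0Ngt; apply: contra nDD' => mxy.
have yA := subsetP (components_sub D'A) y yD'.
apply/eqP/(components_eq DA D'A _ yD').
exact: components_edge_closed DA _ _ xD yA mxy.
Qed.

Lemma components_connected A D : D \in components A m -> connected_on D.
Proof.
case/imsetP=> x _ ->; set C := component A m x.
have cxC y : y \in C -> connect (induced_rel C m) x y.
  rewrite inE => /andP[_ cxy].
  have [] // := connect_sub_stable (e' := induced_rel C m)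
    (P := connect (induced_rel A m) x) (connect0 _ x) _ cxy.
  move=> z w cxz /and3P[zA wA mzw]; have ezw : induced_rel A m z w by apply/and3P.
  have cxw := connect_trans cxz (connect1 ezw).
  by split=> //; apply/and3P; rewrite !inE zA wA cxz cxw.
move=> y z yC zC; have csym := sym_connect_sym (induced_rel_sym C).
by apply: connect_trans (cxC z zC); rewrite csym cxC.
Qed.

Lemma component_edge_closed A B x : B \subset A -> edge_closed B A -> x \in B ->
  component A m x = component B m x.
Proof.
move=> sBA clB xB; apply/setP=> y; rewrite !inE; apply/andP/andP=> -[yA cxy].
  have [] // := connect_sub_stable (e' := induced_rel B m) (P := mem B) xB _ cxy.
  move=> z w zB /and3P[zA wA mzw]; have wB := clB z w zB wA mzw.
  by split=> //; apply/and3P.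
by split; [apply: (subsetP sBA) | apply: connect_induced_subset cxy].
Qed.

Lemma components_edge_closed_sub A B : B \subset A -> edge_closed B A ->
  components B m \subset components A m.
Proof.
move=> sBA clB; apply/subsetP=> _ /imsetP[x xB ->].
by rewrite -(component_edge_closed sBA) // imset_f // (subsetP sBA).
Qed.

Lemma connected_sub_component A D s v : D \subset A -> connected_on D ->
  v \in D -> v \in component A m s -> D \subset component A m s.
Proof.
move=> sDA cD vD; rewrite inE => /andP[_ csv]; apply/subsetP=> y yD.
rewrite inE (subsetP sDA) //= (connect_trans csv) //.
exact: connect_induced_subset sDA (cD v y vD yD).
Qed.

Lemma has_cycle_subset A B : A \subset B -> has_cycle A m -> has_cycle B m.
Proof.
move=> sAB [p [sz up pA cp]]; exists p; split=> //.
  by apply/allP=> v /(allP pA) /(subsetP sAB).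
by apply: sub_cycle cp => x y /and3P[xA yA mxy]; apply/and3P; rewrite !(subsetP sAB).
Qed.

Lemma proper_interval_subset C C' : C \subset C' ->
  proper_interval C' m -> proper_interval C m.
Proof.
move=> sC [l [r [H1 H2 H3]]]; exists l, r; split=> [v|u v|u v] uC *;
  [apply: H1 | apply: H2 | apply: H3]; by rewrite ?(subsetP sC).
Qed.

Lemma pit_graph_subset A B : A \subset B -> pit_graph B m -> pit_graph A m.
Proof.
move=> sAB [simB compB]; split=> [x y xA yA|_ /imsetP[x xA ->]].
  by apply: simB; rewrite (subsetP sAB).
have sCB : component A m x \subset component B m x.
  apply/subsetP=> y; rewrite !inE => /andP[yA cxy].
  by rewrite (subsetP sAB) ?(connect_induced_subset sAB).
case: (compB (component B m x)); rewrite ?imset_f ?(subsetP sAB) //.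
  by move/(proper_interval_subset sCB); left.
case=> _ acyclic; right; split; first exact/components_connected/imset_f.
by move/(has_cycle_subset sCB).
Qed.

Lemma pit_graph_split U W : edge_closed (U :&: W) U ->
  pit_graph (U :&: W) m -> pit_graph (U :\: W) m -> pit_graph U m.
Proof.
move=> clI [simI compI] [simD compD].
have clD : edge_closed (U :\: W) U.
  move=> x y /setDP[xU xW] yU mxy; rewrite inE yU andbT.
  apply: contra xW => yW; rewrite msym in mxy.
  have yI : y \in U :&: W by rewrite inE yU.
  by have /setIP[] := clI y x yI xU mxy.
split=> [x y xU yU|_ /imsetP[x xU ->]].
  case: (posnP (m x y)) => [-> //|mxy].
  have [xW|xW] := boolP (x \in W).
    have xI : x \in U :&: W by rewrite inE xU.
    by apply: simI => //; apply: clI mxy.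
  have xD : x \in U :\: W by rewrite inE xU andbT.
  by apply: simD => //; apply: clD mxy.
have [xW|xW] := boolP (x \in W).
  have xI : x \in U :&: W by rewrite inE xU.
  by rewrite (component_edge_closed (subsetIl U W)) //; apply/compI/imset_f.
have xD : x \in U :\: W by rewrite inE xU andbT.
by rewrite (component_edge_closed (subsetDl U W)) //; apply/compD/imset_f.
Qed.

Hypothesis mloop : forall x, m x x = 0.

(* Whichever order the three disjoint leaf intervals come in, the middle one
   lies strictly inside the interval of the centre. *)
Lemma proper_interval_claw_free C c a b d :
  proper_interval C m -> c \in C -> a \in C -> b \in C -> d \in C ->
  0 < m c a -> 0 < m c b -> 0 < m c d -> a != b -> b != d -> a != d ->
  m a b = 0 -> m b d = 0 -> m a d = 0 -> False.
Proof.
case=> l [r [_ adjE nested]] cC aC bC dC mca mcb mcd ab bd ad mab mbd mad.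
have adj u : u \in C -> 0 < m c u -> (l c <= r u)%R /\ (l u <= r c)%R.
  move=> uC mcu; have cu : c != u by apply: contraTneq mcu => ->; rewrite mloop.
  by move: (adjE c u cC uC cu); rewrite mcu => /esym/andP.
have dis u v : u \in C -> v \in C -> u != v -> m u v = 0 ->
    (r u < l v)%R \/ (r v < l u)%R.
  move=> uC vC uv muv; move: (adjE u v uC vC uv); rewrite muv ltnn.
  by move/esym/negbT; rewrite negb_and -!ltNge => /orP[]; [right|left].
have mid u v w : u \in C -> v \in C -> w \in C ->
    0 < m c u -> 0 < m c v -> 0 < m c w -> (r u < l v)%R -> (r v < l w)%R -> False.
  move=> uC vC wC mu mv mw ruv rvw.
  have [lcu _] := adj u uC mu; have [_ lwc] := adj w wC mw.
  have lcv : (l c < l v)%R := le_lt_trans lcu ruv.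
  have rvc : (r v < r c)%R := lt_le_trans rvw lwc.
  by apply: (nested c v cC vC); rewrite (ltW lcv) (ltW rvc) lcv.
case: (dis a b aC bC ab mab) => h1; case: (dis b d bC dC bd mbd) => h2;
  case: (dis a d aC dC ad mad) => h3;
  by [apply: (mid a b d) | apply: (mid a d b) | apply: (mid d a b)
     | apply: (mid b a d) | apply: (mid b d a) | apply: (mid d b a)].
Qed.

End InducedSubgraphs.

Lemma pitvd_yes_setD (T : finType) (V Y : {set T}) (m : T -> T -> nat) (k : int) :
  Y \subset V -> pitvd_yes (V :\: Y) m (k - Posz #|Y|)%R -> pitvd_yes V m k.
Proof.
move=> sYV [X [sX cardX pitX]]; exists (X :|: Y); split.
- by rewrite subUset sYV (subset_trans sX) ?subsetDl.
- by have [leXY _] := leq_card_setU X Y; lia.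
- by rewrite setUC -setDDl.
Qed.

Section Reduction.
Variables (T : finType) (V : {set T}) (m : T -> T -> nat).
Hypotheses (msym : forall x y, m x y = m y x) (mloop : forall x, m x x = 0).
Variables (S V1 Shat : {set T}) (Chat : {set {set T}}) (M : {set T * {set T}}).
Hypotheses (sSV : S \subset V) (pitS : pit_graph (V :\: S) m).
Hypothesis V1P : forall v, v \in V1 <->
  exists D, [/\ D \in components (V :\: S) m, v \in D & has_cycle D m].
Hypotheses (sShS : Shat \subset S) (sChV1 : Chat \subset components V1 m).
Hypothesis M_edge : forall e, e \in M ->
  [&& e.1 \in Shat, e.2 \in Chat & [exists v in e.2, 0 < m e.1 v]].
Hypothesis M_deg : forall s, s \in Shat -> #|[set e in M | e.1 == s]| = 3.
Hypothesis M_cover : #|[set D in Chat | [exists e in M, e.2 == D]]| = 3 * #|Shat|.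
Hypothesis Chat_nbhd : forall s D, s \in S -> D \in Chat ->
  [exists v in D, 0 < m s v] -> s \in Shat.

Lemma V1_sub : V1 \subset V :\: S.
Proof.
by apply/subsetP=> v /V1P[D [DG vD _]]; apply: (subsetP (components_sub DG)).
Qed.

Lemma V1_edge_closed : edge_closed m V1 (V :\: S).
Proof.
move=> x y /V1P[D [DG xD cD]] yG mxy; apply/V1P; exists D; split=> //.
exact: components_edge_closed DG _ _ xD yG mxy.
Qed.

Lemma Chat_component D : D \in Chat -> D \in components (V :\: S) m.
Proof.
move/(subsetP sChV1); apply/subsetP.
exact: components_edge_closed_sub V1_sub V1_edge_closed.
Qed.

Lemma Chat_cycle D : D \in Chat -> has_cycle D m.
Proof.
move=> DC; have /imsetP[x xV1 DE] := subsetP sChV1 D DC.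
have [D' [D'G xD' cD']] := (V1P x).1 xV1.
suff -> : D = D' by [].
apply: (components_eq msym (Chat_component DC) D'G _ xD').
by rewrite DE component_id.
Qed.

Let W := \bigcup_(D in Chat) D.

Lemma W_sub : W \subset V :\: S.
Proof. by apply/bigcupsP=> D /Chat_component/components_sub. Qed.

Lemma W_edge_closed : edge_closed m W (V :\: Shat).
Proof.
move=> x y /bigcupP[D DC xD] /setDP[yV yShat] mxy; apply/bigcupP; exists D => //.
have [yS|yS] := boolP (y \in S).
  case/negP: yShat; apply: (Chat_nbhd yS DC).
  by apply/existsP; exists x; rewrite xD msym.
by apply: (components_edge_closed (Chat_component DC) xD _ mxy); rewrite inE yS.
Qed.

(* Counting [M] by first coordinates gives [|M| = 3 |Shat|], which by
   [M_cover] is also the size of the image of [snd]. *)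
Lemma expansion_snd_inj : {in M &, injective snd}.
Proof.
have imM : snd @: M = [set D in Chat | [exists e in M, e.2 == D]].
  apply/setP=> D; rewrite inE; apply/imsetP/andP.
    case=> e eM ->; have /and3P[_ -> _] := M_edge eM.
    by split=> //; apply/existsP; exists e; rewrite eM /=.
  case=> _ /existsP[e /andP[eM /eqP <-]].
  by exists e.
have cardM : #|M| = 3 * #|Shat|.
  rewrite -sum1_card (partition_big fst (mem Shat)) => [|e /M_edge/and3P[] //].
  rewrite mulnC -sum_nat_const; apply: eq_bigr => s sSh.
  by rewrite sum1dep_card -(M_deg sSh).
by apply/imset_injP; rewrite eqn_leq leq_imset_card imM M_cover cardM leqnn.
Qed.

Lemma card_partners s : s \in Shat -> #|[set D | (s, D) \in M]| = 3.
Proof.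
move=> sSh; rewrite -(M_deg sSh) -[RHS](card_in_imset (f := snd)).
  apply: eq_card => D; rewrite inE; apply/idP/imsetP=> [sDM|[e]].
    by exists (s, D); rewrite // inE sDM /=.
  by rewrite inE => /andP[eM /eqP <-] ->; rewrite -surjective_pairing.
by move=> e e' /setIdP[eM _] /setIdP[e'M _]; apply: expansion_snd_inj.
Qed.

Lemma partner_meets_solution X s :
  pit_graph (V :\: X) m -> s \in Shat -> s \notin X ->
  [exists D, ((s, D) \in M) && ~~ [disjoint D & X]].
Proof.
move=> [_ compX] sSh sX; apply: contraT; rewrite negb_exists => /forallP avoid.
have sVX : s \in V :\: X by rewrite inE sX (subsetP sSV) ?(subsetP sShS).
have partner D : (s, D) \in M ->
    [/\ D \in Chat, D \subset V :\: X & exists2 v, v \in D & 0 < m s v].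
  move=> sDM; have /and3P[_ /= DC /existsP[v /andP[vD msv]]] := M_edge sDM.
  split=> //; last by exists v.
  apply/subsetP=> y yD.
  have /setDP[yV _] := subsetP (components_sub (Chat_component DC)) y yD.
  by move: (avoid D); rewrite sDM negbK inE yV andbT => /disjointFr->.
have /card_gt2P[D1 [D2 [D3 [[]]]]] : 2 < #|[set D | (s, D) \in M]|.
  by rewrite card_partners.
rewrite !inE => /partner[D1C sD1 [v1 v1D m1]] /partner[D2C sD2 [v2 v2D m2]].
move=> /partner[D3C sD3 [v3 v3D m3]] [n12 n23 n31].
set C := component (V :\: X) m s.
have inC v : v \in V :\: X -> 0 < m s v -> v \in C.
  by move=> vVX msv; rewrite inE vVX; apply: connect1; apply/and3P.
have v1C := inC v1 (subsetP sD1 v1 v1D) m1.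
have v2C := inC v2 (subsetP sD2 v2 v2D) m2.
have v3C := inC v3 (subsetP sD3 v3 v3D) m3.
have G1 := Chat_component D1C; have G2 := Chat_component D2C.
have G3 := Chat_component D3C.
exfalso; case: (compX C (imset_f _ sVX)) => [piC | [_ acyclic]].
  have [n12' m12] := components_separated msym G1 G2 n12 v1D v2D.
  have [n23' m23] := components_separated msym G2 G3 n23 v2D v3D.
  have [n31' m31] := components_separated msym G3 G1 n31 v3D v1D.
  apply: (proper_interval_claw_free mloop piC (component_id m sVX) v1C v2C v3C)
    => //.
  - by rewrite eq_sym.
  - by rewrite msym.
apply: acyclic; apply: has_cycle_subset (Chat_cycle D1C).
apply: (connected_sub_component sD1 _ v1D v1C).
exact: (components_connected msym G1).
Qed.

Lemma card_Shat_setD X : pit_graph (V :\: X) m -> #|Shat :\: X| <= #|X :&: W|.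
Proof.
move=> pitX.
apply: (@leq_card_rel _ _ _ _ (fun s v => [exists D, ((s, D) \in M) && (v \in D)])).
  move=> s /setDP[sSh sX].
  have /existsP[D /andP[sDM]] := partner_meets_solution pitX sSh sX.
  rewrite -setI_eq0 => /set0Pn[v /setIP[vD vX]].
  have /and3P[_ DC _] := M_edge sDM.
  exists v; last by apply/existsP; exists D; rewrite sDM vD.
  by rewrite inE vX; apply/bigcupP; exists D.
move=> s s' v _ _ /existsP[D /andP[sDM vD]] /existsP[D' /andP[s'D'M vD']].
have /and3P[_ /= DC _] := M_edge sDM; have /and3P[_ /= D'C _] := M_edge s'D'M.
rewrite (components_eq msym (Chat_component DC) (Chat_component D'C) vD vD') in sDM.
by case: (expansion_snd_inj sDM s'D'M erefl).
Qed.

Lemma solution_shrinks k :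
  pitvd_yes V m k -> pitvd_yes (V :\: Shat) m (k - Posz #|Shat|)%R.
Proof.
case=> X [sXV cardX pitX].
have WnSh v : v \in W -> v \notin Shat.
  by move/(subsetP W_sub)/setDP=> [_]; apply: contra; apply: (subsetP sShS).
set X' := X :\: (Shat :|: W); exists X'; split.
- apply/subsetP=> v; rewrite !inE negb_or => /andP[/andP[vSh _] vX].
  by rewrite vSh (subsetP sXV).
- have XW : #|X :&: W| <= #|(X :\: Shat) :&: W|.
    by apply/subset_leq_card/subsetP=> v /setIP[vX vW]; rewrite !inE vX vW WnSh.
  have cardXSh := cardsID Shat X; have cardShX := cardsID X Shat.
  have cardXW := cardsID W (X :\: Shat); rewrite setDDl in cardXW.
  rewrite setIC in cardShX; have := card_Shat_setD pitX; rewrite /X'; lia.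
set U := V :\: Shat :\: X'.
have sUV : U \subset V :\: Shat by apply: subsetDl.
apply: (pit_graph_split msym (W := W)).
- move=> x y /setIP[xU xW] yU mxy; rewrite inE yU.
  exact: W_edge_closed xW (subsetP sUV y yU) mxy.
- exact: (pit_graph_subset msym (subset_trans (subsetIr U W) W_sub) pitS).
- apply: (pit_graph_subset msym _ pitX); apply/subsetP=> v; rewrite !inE.
  by case: (v \in W); case: (v \in X); case: (v \in Shat).
Qed.

End Reduction.

Theorem lemma33 (T : finType) (V : {set T}) (m : T -> T -> nat) (k : int)
  (msym : forall x y, m x y = m y x) (mloop : forall x, m x x = 0%N)
  (S : {set T}) (HSV : S \subset V) (HGS : pit_graph (V :\: S) m)
  (V1 : {set T})
  (HV1 : forall v, v \in V1 <->
     exists D, [/\ D \in components (V :\: S) m, v \in D & has_cycle D m])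
  (Shat : {set T}) (Chat : {set {set T}}) :
  Shat \subset S -> Chat \subset components V1 m ->
  Shat != set0 -> Chat != set0 ->
  (* (i) a 3-expansion M of Shat into Chat in the bipartite graph B *)
  (exists M : {set T * {set T}},
     [/\ forall e, e \in M ->
           [&& e.1 \in Shat, e.2 \in Chat & [exists v in e.2, 0 < m e.1 v]],
         forall s, s \in Shat -> #|[set e in M | e.1 == s]| = 3
       & #|[set D in Chat | [exists e in M, e.2 == D]]| = 3 * #|Shat|]) ->
  (* (ii) N_B(Chat) is contained in Shat *)
  (forall s D, s \in S -> D \in Chat -> [exists v in D, 0 < m s v] -> s \in Shat) ->
  pitvd_yes V m k <-> pitvd_yes (V :\: Shat) m (k - Posz #|Shat|)%R.
Proof.
move=> sShS sChV1 _ _ [M [M_edge M_deg M_cover]] Chat_nbhd; split.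
  exact: (solution_shrinks msym mloop HSV HGS HV1 sShS sChV1
            M_edge M_deg M_cover Chat_nbhd).
exact: pitvd_yes_setD (subset_trans sShS HSV).
Qed.
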